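(* Let $*$ be a rank-one preserving product on $M_{n\times m}(\mathbb{C})$. Then $*$ is a generalized Schur product: there exist a unital associative complex algebra $\mathcal{A}$ of dimension $n$, a unital associative complex algebra $\mathcal{B}$ of dimension $m$, and linear bijections $v_{\mathcal{A}}:\mathcal{A}\to\mathbb{C}^n$, $v_{\mathcal{B}}:\mathcal{B}\to\mathbb{C}^m$ such that for all $a,c\in\mathcal{A}$ and $b,d\in\mathcal{B}$, $$ v_{\mathcal{A}}(a)v_{\mathcal{B}}(b)^* * v_{\mathcal{A}}(c)v_{\mathcal{B}}(d)^* = v_{\mathcal{A}}(ac)\,v_{\mathcal{B}}(bd)^*. $$ (In fact one may take $\mathcal{A}=\mathbb{C}^n$, $\mathcal{B}=\mathbb{C}^m$ with suitable products and $v_{\mathcal{A}},v_{\mathcal{B}}$ the identity maps.)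
   Context: A rank-one preserving product (ropp) on $M_{n\times m}(\mathbb{C})$ is an associative bilinear product $*$ on $M_{n\times m}(\mathbb{C})$ which has an identity element of rank one and such that the $*$-product of any two rank-one matrices has rank at most one. Given unital algebras $\mathcal{A}$ (dimension $n$), $\mathcal{B}$ (dimension $m$) and linear bijections $v_{\mathcal{A}}:\mathcal{A}\to\mathbb{C}^n$, $v_{\mathcal{B}}:\mathcal{B}\to\mathbb{C}^m$, the generalized Schur product is the unique bilinear product on $M_{n\times m}(\mathbb{C})$ satisfying $v_{\mathcal{A}}(a)v_{\mathcal{B}}(b)^* * v_{\mathcal{A}}(c)v_{\mathcal{B}}(d)^* = v_{\mathcal{A}}(ac)v_{\mathcal{B}}(bd)^*$; here $u^*$ is the conjugate transpose of a column vector $u$. *)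

From HB Require Import structures.
From mathcomp Require Import all_boot all_order all_algebra all_field.
Set Implicit Arguments. Unset Strict Implicit. Unset Printing Implicit Defensive.
Import GRing.Theory Num.Theory.
Local Open Scope ring_scope.

Definition cadj (C : numClosedFieldType) (k : nat) (u : 'cV[C]_k) : 'rV[C]_k :=
  (map_mx Num.conj_op u)^T.

Definition ropp (C : numClosedFieldType) (n m : nat)
    (mul : 'M[C]_(n, m) -> 'M[C]_(n, m) -> 'M[C]_(n, m)) : Prop :=
  (forall (k : C) (A B D : 'M[C]_(n, m)), mul (k *: A + B) D = k *: mul A D + mul B D) /\
  (forall (k : C) (A B D : 'M[C]_(n, m)), mul D (k *: A + B) = k *: mul D A + mul D B) /\
  (forall A B D : 'M[C]_(n, m), mul A (mul B D) = mul (mul A B) D) /\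
  (exists E : 'M[C]_(n, m), \rank E = 1%N /\
       forall A, mul E A = A /\ mul A E = A) /\
  (forall A B : 'M[C]_(n, m), \rank A = 1%N -> \rank B = 1%N ->
       (\rank (mul A B) <= 1)%N).

Definition gen_schur (C : numClosedFieldType) (n m : nat)
    (mul : 'M[C]_(n, m) -> 'M[C]_(n, m) -> 'M[C]_(n, m)) : Prop :=
  exists (A : falgType C) (B : falgType C),
    (\dim {: A} = n)%N /\ (\dim {: B} = m)%N /\
    exists (vA : {linear A -> 'cV[C]_n}) (vB : {linear B -> 'cV[C]_m}),
      bijective vA /\ bijective vB /\
      forall (a c : A) (b d : B),
        mul (vA a *m cadj (vB b)) (vA c *m cadj (vB d))
        = vA (a * c) *m cadj (vB (b * d)).

From HB Require Import structures.
From mathcomp Require Import all_boot all_order all_algebra all_field.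
From Stdlib Require Import Classical.
Set Implicit Arguments. Unset Strict Implicit. Unset Printing Implicit Defensive.
Import GRing.Theory Num.Theory.
Local Open Scope ring_scope.

(* Let mul be a rank-one preserving product on n x m matrices; its rank-one
   identity is an outer product e *m f.  Everything follows from two facts
   about bilinear maps with values of rank at most one:
   - [outer_product]: such a map K x w agreeing with x *m w whenever x = e or
     w = f is the outer product; so mul (x *m f) (e *m w) = x *m w, and
     likewise mul (e *m w) (x *m f) = x *m w;
   - [right_factor]: such a map G x y equal to x *m f or y *m f when one
     argument is e has values with row factor f; so mul (x *m f) (y *m f)
     = col_prod x y *m f and, dually, mul (e *m a) (e *m b) = e *m row_prod a b.
   Transporting the algebra laws of mul shows that col_prod and row_prod are
   unital products, and associativity of mul yields the factorization
   mul (x *m w) (y *m v) = col_prod x y *m row_prod w v ([mul_outer]).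
   Finally col_prod, and row_prod conjugated into a product on columns, turn
   the column spaces into algebras ([col_algebra]) whose coordinate maps are
   the identity, which exhibits mul as a generalized Schur product. *)

Section LinearFunctions.
Variables (R : pzRingType) (U V : lmodType R) (f : U -> V).
Hypothesis f_lin : linear f.

Lemma lfunD x y : f (x + y) = f x + f y.
Proof. exact: (GRing.semilinear_linear f_lin).2. Qed.

Lemma lfunZ a x : f (a *: x) = a *: f x.
Proof. exact: (GRing.semilinear_linear f_lin).1. Qed.

Lemma lfun0 : f 0 = 0.
Proof. by rewrite -(scale0r 0) lfunZ scale0r. Qed.

End LinearFunctions.

Definition unital_product (R : pzRingType) (V : lmodType R) (p : V -> V -> V) (u : V) :=
  [/\ forall y, linear (p^~ y), forall x, linear (p x), associative p,
      left_id u p & right_id u p].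

Lemma unital_product_transport (R : pzRingType) (U V : lmodType R)
    (h : {linear U -> V}) (p : V -> V -> V) (q : U -> U -> U) (u : U) :
  injective h -> (forall x y, h (q x y) = p (h x) (h y)) ->
  unital_product p (h u) -> unital_product q u.
Proof.
move=> h_inj hq [p_linl p_linr p_assoc p_1l p_1r].
split=> [y a x z|x a y z|x y z|x|x]; apply: h_inj; rewrite ?linearP !hq ?linearP.
- by rewrite (p_linl (h y)).
- by rewrite (p_linr (h x)).
- by rewrite p_assoc.
- by rewrite p_1l.
- by rewrite p_1r.
Qed.

Section RankOne.
Variable F : fieldType.

Lemma mxrank_outer (n m : nat) (u : 'cV[F]_n) (w : 'rV[F]_m) : (\rank (u *m w) <= 1)%N.
Proof. exact: leq_trans (mxrankM_maxl _ _) (rank_leq_col _). Qed.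

Lemma rank_le1P (n m : nat) (A : 'M[F]_(n, m)) :
  (\rank A <= 1)%N -> exists (u : 'cV[F]_n) (w : 'rV[F]_m), A = u *m w.
Proof.
move=> rA; have [->|A0] := eqVneq A 0; first by exists 0, 0; rewrite mul0mx.
have rA1 : \rank A = 1%N by apply/eqP; rewrite eqn_leq rA lt0n mxrank_eq0.
move: (mulmx_base A); move: (col_base A) (row_base A); rewrite rA1 => u w <-.
by exists u, w.
Qed.

Lemma rank_row_mxC (n : nat) (u x : 'cV[F]_n) : \rank (row_mx u x) = \rank (row_mx x u).
Proof. by rewrite -mxrank_tr -[RHS]mxrank_tr !tr_row_mx -!addsmxE addsmxC. Qed.

Lemma rank_col_mxC (m : nat) (a b : 'rV[F]_m) : \rank (col_mx a b) = \rank (col_mx b a).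
Proof. by rewrite -!addsmxE addsmxC. Qed.

Lemma row_proportional (m : nat) (a b : 'rV[F]_m) :
  (\rank (col_mx a b) <= 1)%N -> b != 0 -> exists c, a = c *: b.
Proof.
move=> r_ab b0; have b_ab : (b <= col_mx a b)%MS by rewrite -addsmxE addsmxSr.
have rb : \rank b = 1%N by apply/eqP; rewrite eqn_leq rank_leq_row lt0n mxrank_eq0.
have [_] := mxrank_leqif_sup b_ab; rewrite rb.
have -> : (1 == \rank (col_mx a b))%N by rewrite eqn_leq r_ab (leq_trans _ (mxrankS b_ab)) ?rb.
move/esym; rewrite col_mx_sub => /andP[/submxP[D ->] _].
by exists (D 0 0); rewrite {1}[D]mx11_scalar mul_scalar_mx.
Qed.

Lemma col_proportional (n : nat) (u x : 'cV[F]_n) :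
  (\rank (row_mx u x) <= 1)%N -> x != 0 -> exists c, u = c *: x.
Proof.
rewrite -mxrank_tr tr_row_mx => r_ux x0.
have [|c cE] := row_proportional r_ux; first by rewrite trmx_eq0.
by exists c; apply: trmx_inj; rewrite cE linearZ.
Qed.

Lemma rank1_outer (n m : nat) (A : 'M[F]_(n, m)) : \rank A = 1%N ->
  exists (u : 'cV[F]_n) (w : 'rV[F]_m), [/\ A = u *m w, u != 0 & w != 0].
Proof.
move=> rA; have [u [w AE]] := rank_le1P (eq_leq rA).
exists u, w; split=> //.
- by apply/eqP => u0; move: rA; rewrite AE u0 mul0mx mxrank0.
- by apply/eqP => w0; move: rA; rewrite AE w0 mulmx0 mxrank0.
Qed.

Lemma row_right_inverse (k : nat) (g : 'rV[F]_k) : g != 0 -> exists phi, g *m phi = 1%:M.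
Proof. by move=> g0; apply/row_freeP; rewrite /row_free eqn_leq rank_leq_row lt0n mxrank_eq0. Qed.

Lemma col_left_inverse (k : nat) (g : 'cV[F]_k) : g != 0 -> exists psi, psi *m g = 1%:M.
Proof.
rewrite -trmx_eq0 => /row_right_inverse[phi gphi].
by exists phi^T; rewrite -[g]trmxK -trmx_mul gphi trmx1.
Qed.

Lemma rank_le1_sum2 (n m : nat) (u x : 'cV[F]_n) (v w : 'rV[F]_m) :
  (\rank (u *m v + x *m w)%R <= 1)%N ->
  (\rank (row_mx u x) <= 1)%N \/ (\rank (col_mx v w) <= 1)%N.
Proof.
move=> r; have [r_vw|r_vw] := leqP (\rank (col_mx v w)) 1; first by right.
left; have free_vw : row_free (col_mx v w).
  by rewrite /row_free eqn_leq rank_leq_row.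
by move: r; rewrite -(mul_row_col u x v w) mxrankMfree.
Qed.

End RankOne.

Lemma nonproportional_neq0 (R : pzRingType) (V : lmodType R) (x y : V) :
  ~ (exists c, x = c *: y) -> x != 0.
Proof. by apply: contra_not_neq => ->; exists 0; rewrite scale0r. Qed.

Section RightFactor.
Variables (F : fieldType) (n m : nat).
Variables (G : 'cV[F]_n -> 'cV[F]_n -> 'M[F]_(n, m)) (e : 'cV[F]_n) (f : 'rV[F]_m).
Hypothesis G_linl : forall y, linear (G^~ y).
Hypothesis G_linr : forall x, linear (G x).
Hypothesis G_rank : forall x y, (\rank (G x y) <= 1)%N.
Hypothesis G_er : forall x, G x e = x *m f.
Hypothesis G_el : forall y, G e y = y *m f.
Hypothesis e0 : e != 0.
Hypothesis f0 : f != 0.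

(* The case of non-proportional arguments: write G x y = u *m v; the ranks of
   G x (y + e) and G (x + e) y force v to be proportional to f, unless u is
   proportional to both x and y. *)
Lemma right_factor_indep x y : x != 0 -> ~ (exists c, y = c *: x) ->
  exists w, G x y = w *m f.
Proof.
move=> x0 y_x; have [u [v uvE]] := rank_le1P (G_rank x y).
have v_f (r : 'cV_n) : (\rank (u *m v + r *m f)%R <= 1)%N ->
    (\rank (row_mx u r) <= 1)%N \/ exists w, G x y = w *m f.
  case/rank_le1_sum2 => [|r_vf]; first by left.
  have [c vE] := row_proportional r_vf f0.
  by right; exists (c *: u); rewrite uvE vE -scalemxAr scalemxAl.
have [r_ux|//] : (\rank (row_mx u x) <= 1)%N \/ exists w, G x y = w *m f.
  by apply: v_f; rewrite -uvE -G_er -(lfunD (G_linr x)) G_rank.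
have [r_uy|//] : (\rank (row_mx u y) <= 1)%N \/ exists w, G x y = w *m f.
  by apply: v_f; rewrite -uvE -G_el -(lfunD (G_linl y)) G_rank.
have [u0|u0] := eqVneq u 0; first by exists 0; rewrite uvE u0 !mul0mx.
rewrite rank_row_mxC in r_ux; rewrite rank_row_mxC in r_uy.
have [a xE] := col_proportional r_ux u0; have [b yE] := col_proportional r_uy u0.
have a0 : a != 0 by apply: contraNneq x0 => a0; rewrite xE a0 scale0r.
by case: y_x; exists (b / a); rewrite yE xE scalerA divfK.
Qed.

(* For y = c *: x it suffices to treat G x x, which is G x (x + z) - G x z
   for any z not proportional to x; if there is no such z, then x is a
   multiple of e and G x x a multiple of G e e = e *m f. *)
Lemma right_factor x y : exists w, G x y = w *m f.
Proof.
have [->|x0] := eqVneq x 0; first by exists 0; rewrite (lfun0 (G_linl y)) mul0mx.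
have [[c ->]|] := classic (exists c, y = c *: x); last exact: right_factor_indep.
suff [w wE] : exists w, G x x = w *m f.
  by exists (c *: w); rewrite (lfunZ (G_linr x)) wE scalemxAl.
have [[z z_x]|all_x] := classic (exists z, ~ exists c, z = c *: x).
  have xz_x : ~ exists c, x + z = c *: x.
    case=> d xzE; apply: z_x; exists (d - 1).
    by rewrite scalerBl scale1r -xzE addrC addKr.
  have [w1 w1E] := right_factor_indep x0 xz_x.
  have [w2 w2E] := right_factor_indep x0 z_x.
  by exists (w1 - w2); rewrite mulmxBl -w1E -w2E (lfunD (G_linr x)) addrK.
have [d eE] : exists d, e = d *: x by apply: NNPP => e_x; apply: all_x; exists e.
have d0 : d != 0 by apply: contraNneq e0 => d0; rewrite eE d0 scale0r.
have xE : x = d^-1 *: e by rewrite eE scalerA mulVf // scale1r.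
exists (d^-1 *: (d^-1 *: e)).
by rewrite {1 2}xE (lfunZ (G_linl _)) (lfunZ (G_linr _)) G_er -!scalemxAl.
Qed.

End RightFactor.

Section OuterProduct.
Variables (F : fieldType) (n m : nat).
Variables (K : 'cV[F]_n -> 'rV[F]_m -> 'M[F]_(n, m)) (e : 'cV[F]_n) (f : 'rV[F]_m).
Hypothesis K_linl : forall w, linear (K^~ w).
Hypothesis K_linr : forall x, linear (K x).
Hypothesis K_rank : forall x w, (\rank (K x w) <= 1)%N.
Hypothesis K_e : forall w, K e w = e *m w.
Hypothesis K_f : forall x, K x f = x *m f.
Hypothesis e0 : e != 0.
Hypothesis f0 : f != 0.

Lemma K_expand x w : K (x + e) (w + f) = K x w + x *m f + (e *m w + e *m f).
Proof. by rewrite (lfunD (K_linl _)) (lfunD (K_linr x)) (lfunD (K_linr e)) !K_e K_f. Qed.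

(* For x not proportional to e and w not proportional to f, writing
   K x w = u *m v, the ranks of K (x + e) w and K x (w + f) leave only two
   possible shapes for K x w. *)
Lemma outer_shape x w : ~ (exists c, x = c *: e) -> ~ (exists c, w = c *: f) ->
  exists l, K x w = l *: (x *m w) \/ K x w = l *: (e *m f).
Proof.
move=> x_e w_f; have [u [v uvE]] := rank_le1P (K_rank x w).
have [u0|u0] := eqVneq u 0; first by exists 0; left; rewrite uvE u0 mul0mx scale0r.
have [v0|v0] := eqVneq v 0; first by exists 0; left; rewrite uvE v0 mulmx0 scale0r.
have r1 : (\rank (u *m v + e *m w)%R <= 1)%N.
  by rewrite -uvE -K_e -(lfunD (K_linl w)) K_rank.
have r2 : (\rank (u *m v + x *m f)%R <= 1)%N.
  by rewrite -uvE -K_f -(lfunD (K_linr x)) K_rank.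
have [r_ue|r_vw] := rank_le1_sum2 r1; have [r_ux|r_vf] := rank_le1_sum2 r2.
- rewrite rank_row_mxC in r_ue; rewrite rank_row_mxC in r_ux.
  have [a eE] := col_proportional r_ue u0; have [b xE] := col_proportional r_ux u0.
  have a0 : a != 0 by apply: contraNneq e0 => a0; rewrite eE a0 scale0r.
  by case: x_e; exists (b / a); rewrite xE eE scalerA divfK.
- have [a uE] := col_proportional r_ue e0; have [b vE] := row_proportional r_vf f0.
  by exists (a * b); right; rewrite uvE uE vE -scalemxAl -scalemxAr scalerA.
- have [a uE] := col_proportional r_ux (nonproportional_neq0 x_e).
  have [b vE] := row_proportional r_vw (nonproportional_neq0 w_f).
  by exists (a * b); left; rewrite uvE uE vE -scalemxAl -scalemxAr scalerA.
- rewrite rank_col_mxC in r_vw; rewrite rank_col_mxC in r_vf.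
  have [a wE] := row_proportional r_vw v0; have [b fE] := row_proportional r_vf v0.
  have b0 : b != 0 by apply: contraNneq f0 => b0; rewrite fE b0 scale0r.
  by case: w_f; exists (a / b); rewrite wE fE scalerA divfK.
Qed.

(* The rank of K (x + e) (w + f) forces l = 1 in the first shape of
   [outer_shape] ... *)
Lemma outer_scaled x w l : ~ (exists c, x = c *: e) -> ~ (exists c, w = c *: f) ->
  K x w = l *: (x *m w) -> K x w = x *m w.
Proof.
move=> x_e w_f KE; have [l1|l1] := eqVneq l 1; first by rewrite KE l1 scale1r.
have r := K_rank (x + e) (w + f); rewrite K_expand KE !addrA in r.
have {}r : (\rank ((x + e) *m (w + f) + ((l - 1) *: x) *m w)%R <= 1)%N.
  by rewrite mulmxDl !mulmxDr -scalemxAl scalerBl scale1r addrC !addrA subrK.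
case/rank_le1_sum2: r => r.
  have lx0 : (l - 1) *: x != 0.
    by rewrite scaler_eq0 subr_eq0 (negbTE l1) (nonproportional_neq0 x_e).
  have [c xeE] := col_proportional r lx0; set d := c * (l - 1) - 1.
  have eE : e = d *: x by rewrite /d scalerBl scale1r -scalerA -xeE addrC addKr.
  have d0 : d != 0 by apply: contraNneq e0 => d0; rewrite eE d0 scale0r.
  by case: x_e; exists d^-1; rewrite eE scalerA mulVf // scale1r.
have [c wfE] := row_proportional r (nonproportional_neq0 w_f).
have fE : f = (c - 1) *: w by rewrite scalerBl scale1r -wfE addrC addKr.
have c0 : c - 1 != 0 by apply: contraNneq f0 => c0; rewrite fE c0 scale0r.
by case: w_f; exists (c - 1)^-1; rewrite fE scalerA mulVf // scale1r.
Qed.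

(* ... and rules out its second shape. *)
Lemma outer_not_unit x w l : ~ (exists c, x = c *: e) -> ~ (exists c, w = c *: f) ->
  K x w != l *: (e *m f).
Proof.
move=> x_e w_f; apply/eqP => KE.
have r := K_rank (x + e) (w + f); rewrite K_expand KE in r.
have {}r : (\rank (e *m ((l + 1) *: f + w) + x *m f)%R <= 1)%N.
  rewrite mulmxDr -scalemxAr scalerDl scale1r.
  by rewrite -addrA [x *m f + _]addrC !addrA (addrAC (l *: _)) in r.
case/rank_le1_sum2: r => [|r].
  by rewrite rank_row_mxC => /col_proportional/(_ e0) [c xE]; case: x_e; exists c.
have [c wE] := row_proportional r f0.
by case: w_f; exists (c - (l + 1)); rewrite scalerBl -wE addrC addKr.
Qed.

Lemma outer_product x w : K x w = x *m w.
Proof.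
have [[c ->]|x_e] := classic (exists c, x = c *: e).
  by rewrite (lfunZ (K_linl w)) K_e scalemxAl.
have [[c ->]|w_f] := classic (exists c, w = c *: f).
  by rewrite (lfunZ (K_linr x)) K_f scalemxAr.
have [l [|KE]] := outer_shape x_e w_f; first exact: outer_scaled.
by move/eqP: (outer_not_unit l x_e w_f).
Qed.

End OuterProduct.

Section ColumnAlgebra.
Variables (K : fieldType) (k : nat) (p : 'cV[K]_k -> 'cV[K]_k -> 'cV[K]_k) (u : 'cV[K]_k).
Hypothesis p_unital : unital_product p u.
Hypothesis u0 : u != 0.

Definition col_algebra : Type := 'cV[K]_k.

Let p_linl : forall y, linear (p^~ y). Proof. by case: p_unital. Qed.
Let p_linr : forall x, linear (p x). Proof. by case: p_unital. Qed.
Let p_assoc : associative p. Proof. by case: p_unital. Qed.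
Let p_1l : left_id u p. Proof. by case: p_unital. Qed.
Let p_1r : right_id u p. Proof. by case: p_unital. Qed.

Let p_addl : left_distributive p +%R.
Proof. by move=> x y z; rewrite (lfunD (p_linl z)). Qed.
Let p_addr : right_distributive p +%R.
Proof. by move=> x y z; rewrite (lfunD (p_linr x)). Qed.
Let p_scalel (a : K) x y : a *: p x y = p (a *: x) y.
Proof. by rewrite (lfunZ (p_linl y)). Qed.
Let p_scaler (a : K) x y : a *: p x y = p x (a *: y).
Proof. by rewrite (lfunZ (p_linr x)). Qed.

HB.instance Definition _ := GRing.Lmodule.on col_algebra.
HB.instance Definition _ := Vector.on col_algebra.
HB.instance Definition _ :=
  GRing.Zmodule_isNzRing.Build col_algebra p_assoc p_1l p_1r p_addl p_addr u0.
HB.instance Definition _ := GRing.Lmodule_isLalgebra.Build K col_algebra p_scalel.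
HB.instance Definition _ := GRing.Lalgebra_isAlgebra.Build K col_algebra p_scaler.
HB.instance Definition _ := Algebra_isFalgebra.Build K col_algebra.

Definition col_of (x : col_algebra) : 'cV[K]_k := x.
Lemma col_of_linear : linear col_of. Proof. by []. Qed.
HB.instance Definition _ := GRing.isLinear.Build K col_algebra 'cV[K]_k _ col_of col_of_linear.

Lemma col_algebra_spec : exists (A : falgType K) (v : {linear A -> 'cV[K]_k}),
  [/\ bijective v, \dim {: A} = k & forall x y, v (x * y) = p (v x) (v y)].
Proof.
exists col_algebra, col_of; split=> //; first by exists id.
by rewrite dimvf /dim /= muln1.
Qed.

End ColumnAlgebra.

Section ConjugateTranspose.
Variables (C : numClosedFieldType) (k : nat).

Definition radj (r : 'rV[C]_k) : 'cV[C]_k := (map_mx Num.conj r)^T.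

Lemma cadjK : cancel (@cadj C k) radj.
Proof.
by move=> x; apply/matrixP => i j; rewrite !mxE conjCK.
Qed.

Lemma radj0 : radj 0 = 0.
Proof. by apply/matrixP => i j; rewrite !mxE rmorph0. Qed.

Lemma radjK : cancel radj (@cadj C k).
Proof.
by move=> r; apply/matrixP => i j; rewrite !mxE conjCK.
Qed.

Lemma cadj_conjlin (a : C) (x y : 'cV[C]_k) : cadj (a *: x + y) = a^* *: cadj x + cadj y.
Proof. by apply/matrixP => i j; rewrite !mxE rmorphD rmorphM. Qed.

Lemma radj_conjlin (a : C) (r s : 'rV[C]_k) : radj (a *: r + s) = a^* *: radj r + radj s.
Proof. by apply/matrixP => i j; rewrite !mxE rmorphD rmorphM. Qed.

Lemma unital_product_conj (p : 'rV[C]_k -> 'rV[C]_k -> 'rV[C]_k) (g : 'rV[C]_k) :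
  unital_product p g -> unital_product (fun x y => radj (p (cadj x) (cadj y))) (radj g).
Proof.
case=> p_linl p_linr p_assoc p_1l p_1r.
split=> [y a x z|x a y z|x y z|x|x] /=; rewrite ?radjK.
- by rewrite cadj_conjlin p_linl radj_conjlin conjCK.
- by rewrite cadj_conjlin p_linr radj_conjlin conjCK.
- by rewrite p_assoc.
- by rewrite p_1l cadjK.
- by rewrite p_1r cadjK.
Qed.

End ConjugateTranspose.

Section RoppFactorization.
Variables (C : numClosedFieldType) (n m : nat).
Variable mul : 'M[C]_(n, m) -> 'M[C]_(n, m) -> 'M[C]_(n, m).
Variables (e : 'cV[C]_n) (f : 'rV[C]_m).
Hypothesis mul_unital : unital_product mul (e *m f).
Hypothesis mul_rank : forall A B : 'M[C]_(n, m),
  \rank A = 1%N -> \rank B = 1%N -> (\rank (mul A B) <= 1)%N.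
Hypothesis e0 : e != 0.
Hypothesis f0 : f != 0.

Let mul_linl : forall B, linear (mul^~ B). Proof. by case: mul_unital. Qed.
Let mul_linr : forall A, linear (mul A). Proof. by case: mul_unital. Qed.
Let mulA : associative mul. Proof. by case: mul_unital. Qed.
Let mul1 : left_id (e *m f) mul. Proof. by case: mul_unital. Qed.
Let mulr1 : right_id (e *m f) mul. Proof. by case: mul_unital. Qed.

Let mul_linl_comp (U : lmodType C) (h : U -> 'M[C]_(n, m)) B :
  linear h -> linear (fun x => mul (h x) B).
Proof. by move=> h_lin a x y; rewrite h_lin (mul_linl B). Qed.
Let mul_linr_comp (U : lmodType C) (h : U -> 'M[C]_(n, m)) A :
  linear h -> linear (fun x => mul A (h x)).
Proof. by move=> h_lin a x y; rewrite h_lin (mul_linr A). Qed.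

Lemma mul_rank_outer (x y : 'cV[C]_n) (w v : 'rV[C]_m) : (\rank (mul (x *m w) (y *m v)) <= 1)%N.
Proof.
have rank1 (A : 'M_(n, m)) : (\rank A <= 1)%N -> A != 0 -> \rank A = 1%N.
  by move=> rA A0; apply/eqP; rewrite eqn_leq rA lt0n mxrank_eq0.
have [->|xw0] := eqVneq (x *m w) 0; first by rewrite (lfun0 (mul_linl _)) mxrank0.
have [->|yv0] := eqVneq (y *m v) 0; first by rewrite (lfun0 (mul_linr _)) mxrank0.
by apply: mul_rank; apply: rank1; rewrite ?mxrank_outer.
Qed.

Lemma mul_col_row (x : 'cV[C]_n) (w : 'rV[C]_m) : mul (x *m f) (e *m w) = x *m w.
Proof.
apply: (@outer_product C n m (fun x w => mul (x *m f) (e *m w)) e f).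
- by move=> r; apply: mul_linl_comp => a y z; rewrite mulmxDl scalemxAl.
- by move=> y; apply: mul_linr_comp => a r s; rewrite mulmxDr scalemxAr.
- by move=> y r; apply: mul_rank_outer.
- by move=> r; rewrite mul1.
- by move=> y; rewrite mulr1.
- exact: e0.
- exact: f0.
Qed.

Lemma mul_row_col (x : 'cV[C]_n) (w : 'rV[C]_m) : mul (e *m w) (x *m f) = x *m w.
Proof.
apply: (@outer_product C n m (fun x w => mul (e *m w) (x *m f)) e f).
- by move=> r; apply: mul_linr_comp => a y z; rewrite mulmxDl scalemxAl.
- by move=> y; apply: mul_linl_comp => a r s; rewrite mulmxDr scalemxAr.
- by move=> y r; apply: mul_rank_outer.
- by move=> r; rewrite mulr1.
- by move=> y; rewrite mul1.
- exact: e0.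
- exact: f0.
Qed.

Lemma mul_cols (x y : 'cV[C]_n) : exists w, mul (x *m f) (y *m f) = w *m f.
Proof.
apply: (@right_factor C n m (fun x y => mul (x *m f) (y *m f)) e f).
- by move=> z; apply: mul_linl_comp => a u v; rewrite mulmxDl scalemxAl.
- by move=> u; apply: mul_linr_comp => a v z; rewrite mulmxDl scalemxAl.
- by move=> u v; apply: mul_rank_outer.
- by move=> u; rewrite mulr1.
- by move=> v; rewrite mul1.
- exact: e0.
- exact: f0.
Qed.

Lemma mul_rows (a b : 'rV[C]_m) : exists w, mul (e *m a) (e *m b) = e *m w.
Proof.
pose G (x y : 'cV[C]_m) := (mul (e *m x^T) (e *m y^T))^T.
have [w wE] : exists w, G a^T b^T = w *m e^T.
  apply: (@right_factor C m n G f^T e^T).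
  - move=> z c x y; rewrite /G linearP mulmxDr -scalemxAr /=.
    by rewrite (mul_linl _) linearP.
  - move=> u c x y; rewrite /G linearP mulmxDr -scalemxAr /=.
    by rewrite (mul_linr _) linearP.
  - by move=> u v; rewrite /G mxrank_tr mul_rank_outer.
  - by move=> u; rewrite /G trmxK mulr1 trmx_mul trmxK.
  - by move=> v; rewrite /G trmxK mul1 trmx_mul trmxK.
  - by rewrite trmx_eq0.
  - by rewrite trmx_eq0.
by move: wE; rewrite /G !trmxK => wE; exists w^T; rewrite -[LHS]trmxK wE trmx_mul trmxK.
Qed.

(* With a right inverse phi of f and a left inverse psi of e, the row factor
   of a product of matrices with row factor f, and the column factor of a
   product of matrices with column factor e, become explicit products. *)
Variables (phi : 'cV[C]_m) (psi : 'rV[C]_n).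
Hypothesis f_phi : f *m phi = 1%:M.
Hypothesis psi_e : psi *m e = 1%:M.

Definition col_prod (x y : 'cV[C]_n) : 'cV[C]_n := mul (x *m f) (y *m f) *m phi.
Definition row_prod (a b : 'rV[C]_m) : 'rV[C]_m := psi *m mul (e *m a) (e *m b).

Lemma mul_col_prod x y : mul (x *m f) (y *m f) = col_prod x y *m f.
Proof. by rewrite /col_prod; have [w ->] := mul_cols x y; rewrite -(mulmxA w) f_phi mulmx1. Qed.

Lemma mul_row_prod a b : mul (e *m a) (e *m b) = e *m row_prod a b.
Proof. by rewrite /row_prod; have [w ->] := mul_rows a b; rewrite (mulmxA psi) psi_e mul1mx. Qed.

Lemma col_prod_unital : unital_product col_prod e.
Proof.
apply: (@unital_product_transport _ _ _ (mulmxr f)) mul_unital => [x y|x y].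
  by move/(congr1 (mulmxr phi)); rewrite /= -!mulmxA f_phi !mulmx1.
by rewrite /= mul_col_prod.
Qed.

Lemma row_prod_unital : unital_product row_prod f.
Proof.
apply: (@unital_product_transport _ _ _ (mulmx e)) mul_unital => [a b|a b].
  by move/(congr1 (mulmx psi)); rewrite /= !mulmxA psi_e !mul1mx.
by rewrite /= mul_row_prod.
Qed.

Lemma mul_outer x w y v : mul (x *m w) (y *m v) = col_prod x y *m row_prod w v.
Proof.
rewrite -(mul_col_row x w) -(mul_col_row y v) -mulA (mulA (e *m w)) mul_row_col.
rewrite -(mul_col_row y w) -(mulA (y *m f)) mulA.
by rewrite mul_col_prod mul_row_prod mul_col_row.
Qed.

Lemma ropp_gen_schur : gen_schur mul.
Proof.
have radj_f0 : radj f != 0 by rewrite -radj0 (inj_eq (can_inj (@radjK _ _))).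
have [A [vA [vA_bij dimA vA_mul]]] := col_algebra_spec col_prod_unital e0.
have [B [vB [vB_bij dimB vB_mul]]] :=
  col_algebra_spec (unital_product_conj row_prod_unital) radj_f0.
exists A, B; split=> //; split=> //; exists vA, vB; split=> //; split=> //.
by move=> a c b d; rewrite mul_outer vA_mul vB_mul radjK.
Qed.

End RoppFactorization.

Theorem mainTheorem3 (C : numClosedFieldType) (n m : nat)
    (mul : 'M[C]_(n, m) -> 'M[C]_(n, m) -> 'M[C]_(n, m)) :
  ropp mul -> gen_schur mul.
Proof.
case=> mul_linl [mul_linr [mulA [[E [rankE E_unit]] mul_rank]]].
have [e [f [EE e0 f0]]] := rank1_outer rankE.
have mul_unital : unital_product mul (e *m f).
  split=> [B k A D|A k B D||A|A]; rewrite -?EE.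
  - exact: mul_linl.
  - exact: mul_linr.
  - exact: mulA.
  - by case: (E_unit A).
  - by case: (E_unit A).
have [phi f_phi] := row_right_inverse f0.
have [psi psi_e] := col_left_inverse e0.
exact: (ropp_gen_schur mul_unital mul_rank e0 f0 f_phi psi_e).
Qed.
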